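(* Let $n\geq3$ and let $V$ be a finite dimensional positively graded vector space such that $V^k=0$ for $k<\frac13 n$ or $k>\frac23 n-1$. Then every graph $\Gamma\in\mathbf{HGC}_{V,n}$ with at least one vertex has cohomological degree $|\Gamma|\leq0$.
   Context: Put $V_1=\mathbb{Q}1\oplus V$ with $|1|=0$. The graphs spanning $\mathbf{HGC}_{V,n}$ are connected graphs with internal vertices (here called vertices) and hairs (edges with one free end), in which each vertex carries a (possibly empty) monomial of decorations from $V^*$ (an element $\alpha\in(V^k)^*$ having degree $-k$), each hair carries one decoration from $V_1$, and each vertex is at least trivalent where every $V^*$-decoration at it counts $+1$ to its valence (i.e. if $v$ is the number of vertices, $e$ the number of edges including hairs, $h$ the number of hairs and $u$ the number of $V^*$-decorations, then $3v+h\le 2e+u$). The cohomological degree of such a graph is $|\Gamma|=nv-(n-1)e+d+D$, where $d$ is the total degree of the $V^*$-decorations and $D$ the total degree of the hair decorations in $V_1$. (The edgeless elements and the single edge with two hair ends have no vertex.) *)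

From mathcomp Require Import all_boot all_order all_algebra.
Set Implicit Arguments. Unset Strict Implicit. Unset Printing Implicit Defensive.

(* A finite dimensional graded vector space V is represented by its
   dimension function: dimV k = dim V^k (k : nat; negative degrees are
   absent, which is harmless since V is required to be positively graded).
   A homogeneous basis element of V (resp. of the dual V^* ) of degree k is
   a pair (k, i) with i : 'I_(dimV k). *)
Definition basis_elt (dimV : nat -> nat) := {k : nat & 'I_(dimV k)}.
Definition bdeg (dimV : nat -> nat) (b : basis_elt dimV) : nat := projT1 b.

(* A basis graph spanning HGC_{V,n} that has at least one vertex:
   - vertices are 'I_nv, nv >= 1;
   - internal edges: a list of (unordered, stored as ordered) pairs of vertices
     (multiple edges / loops allowed);
   - hairs: a list of (attachment vertex, decoration in V_1 = Q1 (+) V),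
     decoration None = 1 (degree 0), Some b = basis element b of V;
   - each vertex carries a (possibly empty) monomial of basis elements of V^*
     (an element of (V^k)^* has degree -k). *)
Record hgraph (dimV : nat -> nat) := HGraph {
  nv : nat;
  gedges : seq ('I_nv * 'I_nv);
  ghairs : seq ('I_nv * option (basis_elt dimV));
  gdecos : 'I_nv -> seq (basis_elt dimV)
}.
Arguments nv {dimV} h.
Arguments gedges {dimV} h.
Arguments ghairs {dimV} h.
Arguments gdecos {dimV} h _.

Section Graphs.
Variables (dimV : nat -> nat) (G : hgraph dimV).

Definition adj : rel 'I_(nv G) :=
  fun x y => ((x, y) \in gedges G) || ((y, x) \in gedges G).

Definition gconnected : Prop := forall x y : 'I_(nv G), connect adj x y.

Definition valence (x : 'I_(nv G)) : nat :=
  count (fun e => e.1 == x) (gedges G) + count (fun e => e.2 == x) (gedges G)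
  + count (fun h => h.1 == x) (ghairs G) + size (gdecos G x).

Definition at_least_trivalent : Prop := forall x, 3 <= valence x.

Definition nedges : nat := size (gedges G) + size (ghairs G).

Definition deco_deg : int :=
  - (\sum_(x < nv G) \sum_(b <- gdecos G x) (bdeg b)%:Z)%R.

Definition hair_deg : int :=
  (\sum_(h <- ghairs G) (match h.2 with None => 0%N | Some b => bdeg b end)%:Z)%R.

Definition gdegree (n : nat) : int :=
  (n%:Z * (nv G)%:Z - (n%:Z - 1) * (nedges)%:Z + deco_deg + hair_deg)%R.

End Graphs.

From mathcomp Require Import all_boot all_order all_algebra zify.
Import Order.TTheory GRing.Theory Num.Theory.

(* Counting edge ends, hairs and decorations over all vertices, trivalence
   gives 3v <= 2E + h + u, where E is the number of internal edges.  A
   V^*-decoration of degree -k has n <= 3k and a hair decoration of degree k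
   has 3k <= 2n - 3, so
     3|Gamma| <= n(2E + h + u) - 3(n-1)(E + h) - nu + (2n-3)h = (3-n)E <= 0. *)

Lemma sum_count_eq_size (T : finType) (U : Type) (f : U -> T) (s : seq U) :
  \sum_(x : T) count (fun e => f e == x) s = size s.
Proof.
elim: s => [|a s IHs] /=; first by rewrite big1.
rewrite big_split /= IHs (bigD1 (f a)) //= eqxx big1 ?addn0 // => y /negbTE.
by rewrite eq_sym => ->.
Qed.

Lemma basis_elt_dim_gt0 (dimV : nat -> nat) (b : basis_elt dimV) :
  0 < dimV (bdeg b).
Proof. by case: b => k [i lt_i_dim]; apply: leq_ltn_trans lt_i_dim. Qed.

Section DegreeCount.
Context {dimV : nat -> nat} (G : hgraph dimV).

Definition ndecos : nat := \sum_(x < nv G) size (gdecos G x).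

Definition deco_sum : nat := \sum_(x < nv G) \sum_(b <- gdecos G x) bdeg b.

Definition hair_sum : nat :=
  \sum_(h <- ghairs G) (if h.2 is Some b then bdeg b else 0).

Lemma sum_valence :
  \sum_(x < nv G) valence x = 2 * size (gedges G) + size (ghairs G) + ndecos.
Proof. by rewrite !big_split /= !sum_count_eq_size mul2n -addnn. Qed.

Lemma trivalent_vertex_bound :
  at_least_trivalent G ->
  3 * nv G <= 2 * size (gedges G) + size (ghairs G) + ndecos.
Proof.
move=> tri; rewrite -sum_valence mulnC -{1}[nv G]card_ord -sum_nat_const.
by apply: leq_sum => x _; apply: tri.
Qed.

Lemma ndecos_bound (a c : nat) :
  (forall b : basis_elt dimV, a <= c * bdeg b) -> a * ndecos <= c * deco_sum.
Proof.
move=> deg_lb; rewrite /ndecos /deco_sum !big_distrr /=; apply: leq_sum => x _.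
elim: (gdecos G x) => [|b s IHs]; first by rewrite big_nil /= !muln0.
by rewrite big_cons /= mulnDr mulnS leq_add ?deg_lb.
Qed.

Lemma hair_sum_bound (a c : nat) :
  (forall b : basis_elt dimV, c * bdeg b <= a) ->
  c * hair_sum <= a * size (ghairs G).
Proof.
move=> deg_ub; rewrite /hair_sum big_distrr /= -sum1_size big_distrr /=.
by apply: leq_sum => -[x [b|]] _; rewrite /= ?muln0 // muln1.
Qed.

Lemma gdegreeE (n : nat) :
  gdegree G n = (n%:Z * (nv G)%:Z - (n%:Z - 1) * (nedges G)%:Z
                 - deco_sum%:Z + hair_sum%:Z)%R.
Proof.
rewrite /gdegree /deco_deg /hair_deg; congr (_ + - _ + _)%R.
  rewrite /deco_sum -natz natr_sum; apply: eq_bigr => x _.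
  by rewrite natr_sum; apply: eq_bigr => b _; rewrite natz.
by rewrite /hair_sum -natz natr_sum; apply: eq_bigr => h _; rewrite natz.
Qed.

End DegreeCount.

Theorem lemma13p2 (n : nat) (dimV : nat -> nat)
  (hn : (3 <= n)%N)
  (hfin : exists N : nat, forall k, (N <= k)%N -> dimV k = 0%N)
  (hpos : dimV 0 = 0%N)
  (hconc : forall k : nat, dimV k <> 0%N -> (n <= 3 * k)%N /\ (3 * k <= 2 * n - 3)%N)
  (G : hgraph dimV)
  (hv : (1 <= nv G)%N)
  (hconn : gconnected G)
  (htri : at_least_trivalent G) :
  (gdegree G n <= 0)%R.
Proof.
have deg_bounds (b : basis_elt dimV) : n <= 3 * bdeg b /\ 3 * bdeg b <= 2 * n - 3.
  by apply: hconc; apply/eqP; rewrite -lt0n basis_elt_dim_gt0.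
have tri := trivalent_vertex_bound G htri.
have decos := ndecos_bound G n 3 (fun b => (deg_bounds b).1).
have hairs := hair_sum_bound G (2 * n - 3) 3 (fun b => (deg_bounds b).2).
rewrite gdegreeE /nedges; nia.
Qed.
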